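(* Let $G$ be a group acting linearly and isometrically on a real Hilbert space $M$, let $t_0\in M\setminus\{0\}$ and let $\epsilon$ be a random variable in $M$ with $\mathbb{E}(\epsilon)=0$, $\mathbb{E}(\|\epsilon\|^2)=1$ and $\mathbb{P}\big(\sup_{g\in G}\langle g\cdot\epsilon,t_0\rangle>\langle\epsilon,t_0\rangle\big)>0$. Let $\nu=\mathbb{E}\big(\sup_{g\in G}\langle g\cdot\epsilon,t_0/\|t_0\|\rangle\big)$. Then $\nu\in(0,1]$. For $\sigma>0$ let $X_\sigma=t_0+\sigma\epsilon$, $a_\star(\sigma)=\mathbb{E}\big(\sup_{g}\langle g\cdot X_\sigma,t_0\rangle\big)/\|t_0\|^2$, and let $\delta_\star(\sigma)$ be the unique positive solution of $$\delta^2+2\delta\|t_0\|\Big(1+\sqrt{1+\sigma^2/\|t_0\|^2}\Big)-\|t_0\|^2(a_\star(\sigma)-1)^2=0.$$ Then $\delta_\star(\sigma)\sim\sigma\big(\sqrt{1+\nu^2}-1\big)$ as $\sigma\to+\infty$.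
   Context: $M$ is a real Hilbert space with inner product $\langle\cdot,\cdot\rangle$ and norm $\|\cdot\|$; the action is linear and isometric, i.e. each $x\mapsto g\cdot x$ is linear with $\|g\cdot x\|=\|x\|$. *)

From HB Require Import structures.
From mathcomp Require Import all_boot all_order all_algebra monoid.
From mathcomp Require Import all_classical all_reals all_analysis.
Set Implicit Arguments. Unset Strict Implicit. Unset Printing Implicit Defensive.
Import Order.TTheory GRing.Theory Num.Theory.
Import numFieldNormedType.Exports.
Local Open Scope classical_set_scope.
Local Open Scope ring_scope.

Definition inner_product (R : realType) (M : normedModType R)
  (ip : M -> M -> R) : Prop :=
  [/\ forall x y, ip x y = ip y x,
      forall (a : R) (x y z : M), ip (a *: x + y) z = a * ip x z + ip y z &
      forall x, ip x x = `|x| ^+ 2].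

Definition linear_isometric_action (R : realType) (M : normedModType R)
  (G : groupType) (act : G -> M -> M) : Prop :=
  [/\ forall x, act 1%g x = x,
      forall (g h : G) x, act (g * h)%g x = act g (act h x),
      forall g (a : R) (x y : M), act g (a *: x + y) = a *: act g x + act g y &
      forall g x, `|act g x| = `|x|].

Definition borel_measurable (R : realType) (M : normedModType R)
  (d : measure_display) (T : measurableType d) (f : T -> M) : Prop :=
  forall B : set M, <<s open >> B -> measurable (f @^-1` B).

Definition supG (R : realType) (M : normedModType R) (G : groupType)
  (act : G -> M -> M) (ip : M -> M -> R) (x t : M) : R :=
  sup (range (fun g : G => ip (act g x) t)).

From HB Require Import structures.
From mathcomp Require Import all_boot all_order all_algebra monoid.
From mathcomp Require Import all_classical all_reals all_analysis.
From mathcomp Require Import measurable_realfun ring lra.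
Import Order.TTheory GRing.Theory Num.Theory.
Import numFieldNormedType.Exports.
Local Open Scope classical_set_scope.
Local Open Scope ring_scope.

(* The map x |-> sup_g <g.x, t> is positively homogeneous, subadditive and
   bounded by |x| |t|.  Hence |sup_g <g.X_s, t0> - s sup_g <g.eps, t0>| <= |t0|^2
   for X_s = t0 + s eps, i.e. a_star(s) = s nu / |t0| + O(1).  The bound
   sup_g <g.eps, t0> <= |eps| |t0| <= (|eps|^2 + 1) |t0| / 2 gives nu <= 1, and
   nu > 0 because sup_g <g.eps, t0> - <eps, t0> is nonnegative, has mean |t0| nu
   and is positive with positive probability.
   With k = sqrt (1 + nu^2) - 1, i.e. k^2 + 2 k = nu^2, subtracting
   s^2 (k^2 + 2 k - nu^2) = 0 from the quadratic defining delta_star(s) factors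
   out delta_star(s) - s k against a cofactor larger than 2 s, while the other
   terms are O(|t0| s); hence delta_star(s) = s k + O(|t0|). *)

Section InnerProduct.
Context {R : realType} {M : normedModType R} {ip : M -> M -> R}.
Hypothesis hip : inner_product ip.

Lemma ipC x y : ip x y = ip y x.
Proof. by case: hip. Qed.

Lemma ipxx x : ip x x = `|x| ^+ 2.
Proof. by case: hip. Qed.

Lemma ipDl x y z : ip (x + y) z = ip x z + ip y z.
Proof. by case: hip => _ ipZD _; have := ipZD 1 x y z; rewrite scale1r mul1r. Qed.

Lemma ip0l z : ip 0 z = 0.
Proof. by apply/(addrI (ip 0 z)); rewrite -ipDl !addr0. Qed.

Lemma ipZl a x z : ip (a *: x) z = a * ip x z.
Proof. by case: hip => _ ipZD _; rewrite -[a *: x]addr0 ipZD ip0l addr0. Qed.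

Lemma ipNl x z : ip (- x) z = - ip x z.
Proof. by rewrite -scaleN1r ipZl mulN1r. Qed.

Lemma ip_le_normM x y : ip x y <= `|x| * `|y|.
Proof.
have expand : `|x + y| ^+ 2 = `|x| ^+ 2 + 2 * ip x y + `|y| ^+ 2.
  by rewrite -!ipxx ipDl (ipC x) (ipC y) !ipDl (ipC y x); ring.
have := ler_normD x y; have := normr_ge0 (x + y).
have := normr_ge0 x; have := normr_ge0 y; nra.
Qed.

Lemma norm_ip_le x y : `|ip x y| <= `|x| * `|y|.
Proof.
by rewrite ler_norml ip_le_normM andbT lerNl -ipNl -(normrN x) ip_le_normM.
Qed.

Lemma ip_polarization x t :
  ip x t = 2^-1 * (`|x + t| ^+ 2 - `|x| ^+ 2 - `|t| ^+ 2).
Proof.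
by rewrite -!ipxx ipDl (ipC x (x + t)) (ipC t (x + t)) !ipDl (ipC t x); field.
Qed.

End InnerProduct.

Section Action.
Context {R : realType} {M : normedModType R} {G : groupType} {act : G -> M -> M}.
Hypothesis hact : linear_isometric_action act.

Lemma act1 x : act 1%g x = x.
Proof. by case: hact. Qed.

Lemma act_norm g x : `|act g x| = `|x|.
Proof. by case: hact. Qed.

Lemma actD g x y : act g (x + y) = act g x + act g y.
Proof. by case: hact => _ _ actZD _; have := actZD g 1 x y; rewrite !scale1r. Qed.

Lemma actZ g a x : act g (a *: x) = a *: act g x.
Proof.
have act0 : act g 0 = 0 by apply/(addrI (act g 0)); rewrite -actD !addr0.
by case: hact => _ _ actZD _; rewrite -[a *: x]addr0 actZD act0 addr0.
Qed.

End Action.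

Lemma sup_range_scale (R : realType) (I : Type) (f : I -> R) (c : R) :
  0 < c -> range f !=set0 -> has_ubound (range f) ->
  sup (range (fun i => c * f i)) = c * sup (range f).
Proof.
move=> c0 [_ [i0 _ _]] [b fb].
have cf0 : range (fun i => c * f i) !=set0 by exists (c * f i0), i0.
have f0 : range f !=set0 by exists (f i0), i0.
apply/eqP; rewrite eq_le; apply/andP; split.
  apply: ge_sup cf0 _ => _ [i _ <-]; rewrite ler_pM2l //.
  by apply: ub_le_sup; [exists b | exists i].
rewrite -ler_pdivlMl //; apply: ge_sup f0 _ => _ [i _ <-].
rewrite ler_pdivlMl //; apply: ub_le_sup; last by exists i.
by exists (c * b) => _ [k _ <-]; rewrite ler_pM2l // fb //; exists k.
Qed.

Section SupG.
Context {R : realType} {M : normedModType R} {ip : M -> M -> R}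
  {G : groupType} {act : G -> M -> M}.
Hypotheses (hip : inner_product ip) (hact : linear_isometric_action act).
Local Notation S := (supG act ip).

Lemma ubound_ip_act x t : ubound (range (fun g => ip (act g x) t)) (`|x| * `|t|).
Proof. by move=> _ [g _ <-]; rewrite -(act_norm hact g x) (ip_le_normM hip). Qed.

Lemma has_sup_ip_act x t : has_sup (range (fun g => ip (act g x) t)).
Proof.
split; first by exists (ip (act 1%g x) t), 1%g.
by exists (`|x| * `|t|); exact: ubound_ip_act.
Qed.

Lemma ip_act_le_supG g x t : ip (act g x) t <= S x t.
Proof. by apply: ub_le_sup; [case: (has_sup_ip_act x t) | exists g]. Qed.

Lemma ip_le_supG x t : ip x t <= S x t.
Proof. by rewrite -{1}(act1 hact x) ip_act_le_supG. Qed.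

Lemma supG_le_normM x t : S x t <= `|x| * `|t|.
Proof. by apply: ge_sup; [case: (has_sup_ip_act x t) | exact: ubound_ip_act]. Qed.

Lemma norm_supG_le x t : `|S x t| <= `|x| * `|t|.
Proof.
rewrite ler_norml supG_le_normM andbT (le_trans _ (ip_le_supG x t)) //.
by have := norm_ip_le hip x t; rewrite ler_norml => /andP[].
Qed.

Lemma supG_subadditive x y t : S (x + y) t <= S x t + S y t.
Proof.
apply: ge_sup; first by case: (has_sup_ip_act (x + y) t).
by move=> _ [g _ <-]; rewrite (actD hact) (ipDl hip) lerD // ip_act_le_supG.
Qed.

Lemma supGZl c x t : 0 < c -> S (c *: x) t = c * S x t.
Proof.
move=> c0; have [ne ub] := has_sup_ip_act x t.
rewrite /supG -sup_range_scale //; do 2 f_equal.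
by apply/funext => g; rewrite (actZ hact) (ipZl hip).
Qed.

Lemma supGZr c x t : 0 < c -> S x (c *: t) = c * S x t.
Proof.
move=> c0; have [ne ub] := has_sup_ip_act x t.
rewrite /supG -sup_range_scale //; do 2 f_equal.
by apply/funext => g; rewrite (ipC hip) (ipZl hip) (ipC hip).
Qed.

Lemma dist_supGD_le x y t : `|S (x + y) t - S y t| <= `|x| * `|t|.
Proof.
have up := supG_subadditive x y t; have := supG_le_normM x t.
have := supG_subadditive (x + y) (- x) t; rewrite addrC addKr.
have := supG_le_normM (- x) t; rewrite normrN.
by rewrite ler_norml; lra.
Qed.

End SupG.

Lemma measurable_fun_comp_continuous (R : realType) (M : normedModType R)
  (d : measure_display) (T : measurableType d) (f : T -> M) (h : M -> R) :
  borel_measurable f -> continuous h -> measurable_fun setT (h \o f).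
Proof.
move=> mf ch; apply: (measurability _ (RGenOpens.measurableE R)).
move=> _ [_ [a [b ->] <-]]; rewrite setTI.
apply: (mf (h @^-1` `]a, b[)); apply: sub_sigma_algebra.
by move/continuousP: ch; apply; exact: interval_open.
Qed.
Arguments measurable_fun_comp_continuous {R M d T f h}.

Lemma continuous_norm_addr (R : realType) (M : normedModType R) (c : M) :
  continuous (fun x : M => `|x + c|).
Proof.
move=> x; apply: (continuous_comp (f := fun x => x + c)).
  exact: cvgD cvg_id (cvg_cst _).
exact: norm_continuous.
Qed.

Section DeltaStar.
Context {R : realType}.
Implicit Types n nu sg a d : R.

Definition delta_star_eq n sg a d : Prop :=
  d ^+ 2 + 2 * d * n * (1 + Num.sqrt (1 + sg ^+ 2 / n ^+ 2))
  - n ^+ 2 * (a - 1) ^+ 2 = 0.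

Lemma quadratic_pos_root_unique (B C : R) : 0 < B -> 0 < C ->
  exists! d : R, 0 < d /\ d ^+ 2 + 2 * d * B - C = 0.
Proof.
move=> B0 C0; have r0 := sqrtr_ge0 (B ^+ 2 + C).
have r2 : Num.sqrt (B ^+ 2 + C) ^+ 2 = B ^+ 2 + C.
  by rewrite sqr_sqrtr // addr_ge0 ?sqr_ge0 // ltW.
set r := Num.sqrt _ in r0 r2.
exists (r - B); split; first by split; nra.
move=> d [d0 hd]; have : (d - (r - B)) * (d + r + B) == 0 by apply/eqP; nra.
by rewrite mulf_eq0 subr_eq0 => /orP[/eqP -> // | /eqP]; lra.
Qed.

Lemma sqrt_one_add_sq_div_bounds n sg : 0 < n -> 0 <= sg ->
  sg <= n * Num.sqrt (1 + sg ^+ 2 / n ^+ 2) <= sg + n.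
Proof.
move=> n0 sg0; set q := n * _.
have q0 : 0 <= q by rewrite mulr_ge0 ?sqrtr_ge0 // ltW.
have q2 : q ^+ 2 = n ^+ 2 + sg ^+ 2.
  rewrite exprMn sqr_sqrtr ?addr_ge0 ?divr_ge0 ?sqr_ge0 //.
  by field; rewrite gt_eqF.
by apply/andP; split; nra.
Qed.

Lemma delta_star_eq_unique n sg a : 0 < n -> 0 <= sg -> a != 1 ->
  exists! d, 0 < d /\ delta_star_eq n sg a d.
Proof.
move=> n0 sg0 a1; set B := n * (1 + Num.sqrt (1 + sg ^+ 2 / n ^+ 2)).
have B0 : 0 < B by rewrite mulr_gt0 // ltr_pwDl ?sqrtr_ge0.
have C0 : 0 < n ^+ 2 * (a - 1) ^+ 2.
  apply: mulr_gt0; first exact: exprn_gt0.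
  by rewrite exprn_even_gt0 //= subr_eq0.
have [d [[d0 hd] uniq]] := @quadratic_pos_root_unique B _ B0 C0.
have eqB d' : delta_star_eq n sg a d' <->
    d' ^+ 2 + 2 * d' * B - n ^+ 2 * (a - 1) ^+ 2 = 0.
  by rewrite /delta_star_eq /B mulrA.
by exists d; split=> [|d' [d'0 /eqB hd']]; [split => //; apply/eqB | exact: uniq].
Qed.

Lemma pos_root_dist_le n nu sg (k B z d : R) :
  0 < n -> 0 <= nu <= 1 -> n <= sg -> 0 <= k -> k ^+ 2 + 2 * k = nu ^+ 2 ->
  sg <= B <= sg + 2 * n -> `|z - sg * nu| <= 2 * n ->
  0 < d -> d ^+ 2 + 2 * d * B = z ^+ 2 -> `|d - sg * k| <= 8 * n.
Proof.
move=> n0 /andP[nu0 nu1] nsg k0 hk /andP[sgB Bsg] hz d0 hd.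
set E := d - sg * k; set W := d + sg * k + 2 * sg.
have W0 : 0 < W by rewrite /W; nra.
have EW : E * W = (z - sg * nu) * (z + sg * nu) - 2 * (B - sg) * d
    + (d ^+ 2 + 2 * d * B - z ^+ 2) - sg ^+ 2 * (k ^+ 2 + 2 * k - nu ^+ 2).
  by rewrite /E /W; ring.
rewrite hd hk !subrr mulr0 addr0 subr0 in EW.
move: hz; rewrite ler_norml => /andP[hz1 hz2].
have hzz : `|(z - sg * nu) * (z + sg * nu)| <= 2 * n * (2 * n + 2 * sg).
  by rewrite normrM; apply: ler_pM => //; rewrite ler_norml; apply/andP; split; nra.
rewrite -(ler_pM2r W0) -[W in `|E| * W](gtr0_norm W0) -normrM EW.
apply: le_trans (ler_normB _ _) _.
rewrite [`|2 * _ * d|]ger0_norm; last by rewrite !mulr_ge0 ?subr_ge0 // ltW.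
have : (B - sg) * d <= 2 * n * d by rewrite ler_pM2r // lerBlDl.
have : n * n <= n * sg by rewrite ler_pM2l.
have : 0 <= n * (sg * k) by rewrite !mulr_ge0 // ltW // (lt_le_trans n0).
rewrite /W; nra.
Qed.

Lemma delta_star_eq_dist_le n nu sg a d :
  0 < n -> 0 <= nu <= 1 -> n <= sg -> `|a - sg * nu / n| <= 1 ->
  0 < d -> delta_star_eq n sg a d ->
  `|d - sg * (Num.sqrt (1 + nu ^+ 2) - 1)| <= 8 * n.
Proof.
move=> n0 nu01 nsg ha d0 hd.
have r0 := sqrtr_ge0 (1 + nu ^+ 2).
have r2 : Num.sqrt (1 + nu ^+ 2) ^+ 2 = 1 + nu ^+ 2.
  by rewrite sqr_sqrtr // addr_ge0 ?sqr_ge0.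
apply: (@pos_root_dist_le n nu sg _ (n * (1 + Num.sqrt (1 + sg ^+ 2 / n ^+ 2)))
  (n * (a - 1)) d) => //; [nra | nra | | | ].
- have := @sqrt_one_add_sq_div_bounds n sg n0 (le_trans (ltW n0) nsg).
  by rewrite mulrDr mulr1; lra.
- have -> : n * (a - 1) - sg * nu = n * (a - sg * nu / n) - n.
    by field; rewrite gt_eqF.
  move: ha; rewrite ler_norml => /andP[ha1 ha2].
  by rewrite ler_norml; apply/andP; split; nra.
- by apply/eqP; rewrite -subr_eq0 -hd /delta_star_eq; apply/eqP; ring.
Qed.

End DeltaStar.

Section DeltaStarAsymptotics.
Context {R : realType} {n nu : R} {a : R -> R}.
Hypotheses (n0 : 0 < n) (nu0 : 0 < nu) (nu1 : nu <= 1).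
Hypothesis a_near_linear : forall sg, 0 < sg -> `|a sg - sg * nu / n| <= 1.

Lemma delta_star_eq_unique_near :
  \forall sg \near +oo, exists! d, 0 < d /\ delta_star_eq n sg (a sg) d.
Proof.
near=> sg.
have sg_gt : 2 * n / nu < sg by near: sg; apply: nbhs_pinfty_gt; exact: num_real.
have sg0 : 0 < sg by apply: lt_trans sg_gt; rewrite divr_gt0 ?mulr_gt0.
apply: (delta_star_eq_unique _ _ _ n0 (ltW sg0)).
have : 2 < sg * nu / n by rewrite ltr_pdivlMr // -ltr_pdivrMr // mulrC.
move: (a_near_linear _ sg0); rewrite ler_norml => /andP[ha _] h2.
by rewrite gt_eqF //; lra.
Unshelve. all: end_near.
Qed.

Lemma delta_star_equiv (ds : R -> R) :
  (\forall sg \near +oo, 0 < ds sg /\ delta_star_eq n sg (a sg) (ds sg)) ->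
  (ds sg / (sg * (Num.sqrt (1 + nu ^+ 2) - 1))) @[sg --> +oo] --> (1 : R).
Proof.
move=> hds; set k := Num.sqrt (1 + nu ^+ 2) - 1.
have k0 : 0 < k.
  by rewrite /k subr_gt0 -[X in X < _]sqrtr1 ltr_sqrt ?ltrDl ?addr_gt0 ?exprn_gt0.
apply/cvgrPdist_le => e e0; near=> sg.
have nsg : n <= sg by near: sg; apply: nbhs_pinfty_ge; exact: num_real.
have esg : 8 * n / (k * e) <= sg by near: sg; apply: nbhs_pinfty_ge; exact: num_real.
have [d0 hd] : 0 < ds sg /\ delta_star_eq n sg (a sg) (ds sg) by near: sg.
have sgk0 : 0 < sg * k by rewrite mulr_gt0 // (lt_le_trans n0).
have nu01 : 0 <= nu <= 1 by rewrite ltW.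
have dist_le := @delta_star_eq_dist_le _ n nu sg (a sg) (ds sg) n0 nu01 nsg
  (a_near_linear _ (lt_le_trans n0 nsg)) d0 hd.
rewrite -[1](divff (lt0r_neq0 sgk0)) -mulrBl normrM normfV (gtr0_norm sgk0).
rewrite distrC ler_pdivrMr // (le_trans dist_le) //.
by move: esg; rewrite ler_pdivrMr ?mulr_gt0 //; nra.
Unshelve. all: end_near.
Qed.

End DeltaStarAsymptotics.

Section AffineExpectation.
Context {R : realType} {d : measure_display} {T : measurableType d}
  {P : probability T R} {f : T -> R}.
Hypothesis fi : P.-integrable setT (EFin \o f).

Lemma integrable_affine (a b : R) :
  P.-integrable setT (EFin \o (fun w => a * f w + b)).
Proof.
apply: (eq_integrable measurableT
  (fun w => (a%:E * (EFin \o f) w + (EFin \o cst b) w)%E)).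
  by move=> w _ /=; rewrite EFinD EFinM.
apply: integrableD => //; first exact: integrableZl.
exact: finite_measure_integrable_cst.
Qed.

Lemma integral_affine (a b : R) :
  (\int[P]_w ((a * f w + b)%:E) = (a * fine (\int[P]_w (f w)%:E) + b)%:E)%E.
Proof.
have afi : P.-integrable setT (EFin \o (fun w => a * f w)).
  apply: (eq_integrable measurableT _ _ _ (integrableZl measurableT a fi)).
  by move=> w _ /=; rewrite EFinM.
have bi : P.-integrable setT (EFin \o cst b) by exact: finite_measure_integrable_cst.
rewrite (eq_integral
  (fun w => (EFin \o (fun w => (a * f w)%R)) w + (EFin \o cst b) w)%E);
  last by move=> w _; rewrite /= EFinD.
rewrite integralD_EFin //=.
under eq_integral do rewrite EFinM.
rewrite integralZl // integral_cst //.
rewrite [X in (_ + b%:E * X)%E](_ : _ = 1%E) ?mule1; last exact: probability_setT.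
by rewrite -(fineK (integrable_fin_num measurableT fi)) /= EFinD EFinM.
Qed.

End AffineExpectation.

Section Noise.
Context {R : realType} {M : normedModType R} {d : measure_display}
  {T : measurableType d} {P : probability T R} {eps : T -> M}.
Hypotheses (meps : borel_measurable eps)
  (eps_sq : (\int[P]_w ((`|eps w| ^+ 2)%:E) = 1)%E).

Lemma measurable_norm_addr (c : M) : measurable_fun setT (fun w => `|eps w + c|).
Proof.
apply: (measurable_fun_comp_continuous (h := fun x => `|x + c|) meps).
exact: continuous_norm_addr.
Qed.

Lemma measurable_norm_noise : measurable_fun setT (fun w => `|eps w|).
Proof.
apply: (measurable_fun_comp_continuous (h := Num.norm) meps).
exact: norm_continuous.
Qed.

Lemma integrable_norm_sq : P.-integrable setT (EFin \o (fun w => `|eps w| ^+ 2)).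
Proof.
apply/integrableP; split.
  exact/measurable_EFinP/measurable_funX/measurable_norm_noise.
under eq_integral do rewrite /= ger0_norm ?sqr_ge0 //.
by rewrite eps_sq ltry.
Qed.

Lemma integrable_dominated_norm_sq (K L : R) (f : T -> R) :
  measurable_fun setT f -> (forall w, `|f w| <= K * `|eps w| ^+ 2 + L) ->
  P.-integrable setT (EFin \o f).
Proof.
move=> mf f_le.
apply: (le_integrable measurableT _ _ (integrable_affine integrable_norm_sq K L)).
  exact/measurable_EFinP.
by move=> w _ /=; rewrite lee_fin (le_trans (f_le w)) // ler_norm.
Qed.

Context {ip : M -> M -> R} {G : groupType} {act : G -> M -> M}.
Hypotheses (hip : inner_product ip) (hact : linear_isometric_action act).
Local Notation S := (supG act ip).

Lemma measurable_ip_noise t : measurable_fun setT (fun w => ip (eps w) t).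
Proof.
under eq_fun do rewrite (ip_polarization hip).
apply: measurable_funM => //; apply: measurable_funB => //.
apply: measurable_funB; apply: measurable_funX.
  exact: measurable_norm_addr.
exact: measurable_norm_noise.
Qed.

Lemma integrable_ip_noise t : P.-integrable setT (EFin \o (fun w => ip (eps w) t)).
Proof.
apply: (integrable_dominated_norm_sq `|t| `|t| _ (measurable_ip_noise t)) => w.
apply: le_trans (norm_ip_le hip _ _) _.
have : `|eps w| <= `|eps w| ^+ 2 + 1 by have := normr_ge0 (eps w); nra.
by move/(ler_wpM2l (normr_ge0 t)); lra.
Qed.

Lemma integrable_supG_affine x c t :
  measurable_fun setT (fun w => S (x + c *: eps w) t) ->
  P.-integrable setT (EFin \o (fun w => S (x + c *: eps w) t)).
Proof.
move=> mS.
apply: (integrable_dominated_norm_sq (`|c| * `|t|) ((`|x| + `|c|) * `|t|) _ mS).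
move=> w; apply: le_trans (norm_supG_le hip hact _ _) _.
have norm_le : `|x + c *: eps w| <= `|x| + `|c| * (`|eps w| ^+ 2 + 1).
  rewrite (le_trans (ler_normD _ _)) // normrZ lerD2l ler_wpM2l //.
  by have := normr_ge0 (eps w); nra.
have := ler_wpM2r (normr_ge0 t) norm_le; lra.
Qed.

Context {t : M}.
Hypothesis mS : measurable_fun setT (fun w => S (eps w) t).

Lemma integrable_supG : P.-integrable setT (EFin \o (fun w => S (eps w) t)).
Proof.
have affine : (fun w => S (eps w) t) = (fun w => S (0 + 1 *: eps w) t).
  by apply/funext => w; rewrite add0r scale1r.
by rewrite affine; apply: integrable_supG_affine; rewrite -affine.
Qed.

Lemma expect_supG_le : fine (\int[P]_w (S (eps w) t)%:E) <= `|t|.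
Proof.
have iS := integrable_supG.
rewrite -lee_fin fineK ?(integrable_fin_num measurableT iS) //.
apply: le_trans (le_integral measurableT iS
  (integrable_affine integrable_norm_sq (`|t| / 2) (`|t| / 2)) _) _.
  move=> w _; rewrite lee_fin (le_trans (supG_le_normM hip hact _ _)) //.
  by have := sqr_ge0 (`|eps w| - 1); have := normr_ge0 t; nra.
by rewrite integral_affine ?integrable_norm_sq // eps_sq /= mulr1 lee_fin; lra.
Qed.

Lemma expect_supG_gt0 :
  (\int[P]_w (ip (eps w) t)%:E = 0)%E ->
  (0 < P [set w | (ip (eps w) t < S (eps w) t)%R])%E ->
  0 < fine (\int[P]_w (S (eps w) t)%:E).
Proof.
move=> mean0 gap_pos; have iS := integrable_supG.
pose D w := S (eps w) t - ip (eps w) t.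
have D_ge0 w : 0 <= D w by rewrite subr_ge0 ip_le_supG.
have mD : measurable_fun setT D.
  by apply: measurable_funB => //; exact: measurable_ip_noise.
have intD : (\int[P]_w (D w)%:E = \int[P]_w (S (eps w) t)%:E)%E.
  under eq_integral do rewrite EFinB.
  by rewrite integralB_EFin ?integrable_ip_noise // mean0 sube0.
have fin := integrable_fin_num measurableT iS.
rewrite lt0r -lee_fin fineK // -intD integral_ge0 ?andbT => [|w _];
  last by rewrite lee_fin.
apply/eqP => int0.
have : (\int[P]_w `|(D w)%:E| = 0)%E.
  under eq_integral do rewrite gee0_abs ?lee_fin //.
  by rewrite -[LHS]fineK ?int0 // intD.
move/(ae_eq_integral_abs P measurableT ((measurable_EFinP _ _).2 mD)).
move=> [N [mN PN0 DN]].
have mgap : measurable [set w | (ip (eps w) t < S (eps w) t)%R].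
  have := measurable_fun_ltr (measurable_ip_noise t) mS measurableT
    (_ : measurable [set true]).
  by rewrite setTI; apply.
suff gap0 : P [set w | (ip (eps w) t < S (eps w) t)%R] = 0%E.
  by rewrite gap0 ltxx in gap_pos.
apply: (subset_measure0 mgap mN _ PN0) => w gap_w; apply: DN => /= D0.
by move: (D0 I) gap_w => /= /eqP; rewrite eqe subr_eq0 => /eqP ->; rewrite ltxx.
Qed.

Lemma expect_supG_affine_dist x c : 0 < c ->
  measurable_fun setT (fun w => S (x + c *: eps w) t) ->
  `|fine (\int[P]_w (S (x + c *: eps w) t)%:E)
    - c * fine (\int[P]_w (S (eps w) t)%:E)| <= `|x| * `|t|.
Proof.
move=> c0 mSx; have iS := integrable_supG.
have iSx : P.-integrable setT (EFin \o (fun w => S (x + c *: eps w) t)).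
  exact: integrable_supG_affine.
have dist_le w : `|S (x + c *: eps w) t - c * S (eps w) t| <= `|x| * `|t|.
  by rewrite -(supGZl hip hact) // dist_supGD_le.
have Sx_fin := fineK (integrable_fin_num measurableT iSx).
have upper : fine (\int[P]_w (S (x + c *: eps w) t)%:E)
    <= c * fine (\int[P]_w (S (eps w) t)%:E) + `|x| * `|t|.
  rewrite -lee_fin Sx_fin -(integral_affine iS).
  apply: le_integral => // [|w _]; first exact: integrable_affine.
  by rewrite lee_fin; move: (dist_le w); rewrite ler_norml; lra.
have lower : c * fine (\int[P]_w (S (eps w) t)%:E) - `|x| * `|t|
    <= fine (\int[P]_w (S (x + c *: eps w) t)%:E).
  rewrite -lee_fin Sx_fin -(integral_affine iS).
  apply: le_integral => // [|w _]; first exact: integrable_affine.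
  by rewrite lee_fin; move: (dist_le w); rewrite ler_norml; lra.
by rewrite ler_norml; lra.
Qed.

End Noise.

Theorem mainTheorem13 (R : realType) (M : completeNormedModType R)
  (ip : M -> M -> R) (G : groupType) (act : G -> M -> M)
  (d : measure_display) (Omega : measurableType d) (P : probability Omega R)
  (eps : Omega -> M) (t0 : M) :
  inner_product ip ->
  linear_isometric_action act ->
  t0 != 0 ->
  borel_measurable eps ->
  (* E(eps) = 0 (weakly: every coordinate functional has mean zero) *)
  (forall t : M, (\int[P]_w (ip (eps w) t)%:E = 0)%E) ->
  (* E(||eps||^2) = 1 *)
  (\int[P]_w ((`|eps w| ^+ 2)%:E) = 1)%E ->
  (* the suprema below are random variables *)
  measurable_fun setT (fun w => supG act ip (eps w) t0) ->
  (forall sigma : R, 0 < sigma ->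
     measurable_fun setT (fun w => supG act ip (t0 + sigma *: eps w) t0)) ->
  (0 < P [set w | (ip (eps w) t0 < supG act ip (eps w) t0)%R])%E ->
  let nuE := (\int[P]_w (supG act ip (eps w) (`|t0|^-1 *: t0))%:E)%E in
  let nu := fine nuE in
  let a_star := fun sigma : R =>
    fine (\int[P]_w (supG act ip (t0 + sigma *: eps w) t0)%:E)%E / `|t0| ^+ 2 in
  let delta_eq := fun sigma delta : R =>
    delta ^+ 2 + 2 * delta * `|t0| * (1 + Num.sqrt (1 + sigma ^+ 2 / `|t0| ^+ 2))
    - `|t0| ^+ 2 * (a_star sigma - 1) ^+ 2 = 0 in
  [/\ (0 < nuE <= 1)%E,
      (\forall sigma \near +oo, exists! delta : R, 0 < delta /\ delta_eq sigma delta)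
    & forall delta_star : R -> R,
        (\forall sigma \near +oo, 0 < delta_star sigma /\ delta_eq sigma (delta_star sigma)) ->
        (delta_star sigma / (sigma * (Num.sqrt (1 + nu ^+ 2) - 1)))
          @[sigma --> +oo] --> (1 : R)].
Proof.
move=> hip hact t0_neq0 meps mean0 sq1 mSe mSs gap_pos nuE nu a_star delta_eq.
have n0 : 0 < `|t0| by rewrite normr_gt0.
set j := fine (\int[P]_w (supG act ip (eps w) t0)%:E).
have j_gt0 : 0 < j := expect_supG_gt0 meps sq1 hip hact mSe (mean0 t0) gap_pos.
have j_le : j <= `|t0| := expect_supG_le meps sq1 hip hact mSe.
have nuE_j : nuE = (`|t0|^-1 * j)%:E.
  have iS := integrable_supG meps sq1 hip hact mSe.
  rewrite /nuE -[_ * j]addr0 -(integral_affine iS).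
  by apply: eq_integral => w _; rewrite addr0 (supGZr hip hact) // invr_gt0.
have nu_j : nu = `|t0|^-1 * j by rewrite /nu nuE_j.
have nu0 : 0 < nu by rewrite nu_j mulr_gt0 // invr_gt0.
have nu1 : nu <= 1 by rewrite nu_j mulrC ler_pdivrMr // mul1r.
have a_near_linear sg : 0 < sg -> `|a_star sg - sg * nu / `|t0| | <= 1.
  move=> sg0.
  have := expect_supG_affine_dist meps sq1 hip hact mSe t0 sg sg0 (mSs sg sg0).
  rewrite /a_star nu_j -/j; set I := fine _ => dist_le.
  have t2 : 0 < `|t0| ^+ 2 by rewrite exprn_gt0.
  have -> : I / `|t0| ^+ 2 - sg * (`|t0|^-1 * j) / `|t0| = (I - sg * j) / `|t0| ^+ 2.
    by field; rewrite gt_eqF.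
  by rewrite normrM normfV [`|_ ^+ 2|]gtr0_norm // ler_pdivrMr // mul1r expr2.
split.
- by rewrite nuE_j -nu_j lte_fin lee_fin nu0 nu1.
- exact: delta_star_eq_unique_near n0 nu0 a_near_linear.
- exact: delta_star_equiv n0 nu0 nu1 a_near_linear.
Qed.
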